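(* Let $X$ be a complete CAT(0) space and $(T_n)_{n\in\mathbb{N}}$ a family of self-mappings of $X$, each satisfying property $(P_2)$, with $F:=\bigcap_{n\in\mathbb{N}} Fix(T_n)\neq\emptyset$. For $x\in X$ let $x_0:=x$ and $x_{n+1}:=T_nx_n$ for all $n$. Let $(\gamma_n)$ be a sequence of positive reals with $\sum_{n=0}^\infty\gamma_n^2=\infty$. Assume: (C1) for all $n,m\in\mathbb{N}$ and all $w\in X$, $d(T_nw,T_mw)\le \frac{|\gamma_n-\gamma_m|}{\gamma_n}d(w,T_nw)$; (C2) the sequence $\left(\frac{d(x_n,x_{n+1})}{\gamma_n}\right)_{n}$ is nonincreasing. Then for every $m\in\mathbb{N}$, $\lim_{n\to\infty} d(x_n,T_mx_n)=0$.
   Context: A geodesic space $(X,d)$ is CAT(0) if for all $z\in X$, all geodesics $\gamma:[a,b]\to X$ and all $t\in[0,1]$, $d^2(z,\gamma((1-t)a+tb))\le(1-t)d^2(z,\gamma(a))+td^2(z,\gamma(b))-t(1-t)d^2(\gamma(a),\gamma(b))$. A mapping $T:X\to X$ satisfies property $(P_2)$ if for all $x,y\in X$, $2d^2(Tx,Ty)\le d^2(x,Ty)+d^2(y,Tx)-d^2(x,Tx)-d^2(y,Ty)$. $Fix(T)$ is the fixed point set of $T$. *)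

From Stdlib Require Import Reals Lra.
Open Scope R_scope.

Definition is_metric {X : Type} (d : X -> X -> R) : Prop :=
  (forall x y, 0 <= d x y) /\
  (forall x y, d x y = 0 <-> x = y) /\
  (forall x y, d x y = d y x) /\
  (forall x y z, d x z <= d x y + d y z).

Definition is_geodesic {X : Type} (d : X -> X -> R) (g : R -> X) (a b : R) : Prop :=
  a <= b /\
  forall s t, a <= s <= b -> a <= t <= b -> d (g s) (g t) = Rabs (s - t).

Definition geodesic_space {X : Type} (d : X -> X -> R) : Prop :=
  is_metric d /\
  forall x y, exists g : R -> X,
    is_geodesic d g 0 (d x y) /\ g 0 = x /\ g (d x y) = y.

Definition CAT0 {X : Type} (d : X -> X -> R) : Prop :=
  geodesic_space d /\
  forall (z : X) (g : R -> X) (a b : R), is_geodesic d g a b ->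
  forall t, 0 <= t <= 1 ->
    (d z (g ((1 - t) * a + t * b))) ^ 2 <=
      (1 - t) * (d z (g a)) ^ 2 + t * (d z (g b)) ^ 2
      - t * (1 - t) * (d (g a) (g b)) ^ 2.

Definition cauchy_seq {X : Type} (d : X -> X -> R) (u : nat -> X) : Prop :=
  forall eps, 0 < eps -> exists N, forall n m, (n >= N)%nat -> (m >= N)%nat ->
    d (u n) (u m) < eps.

Definition converges_to {X : Type} (d : X -> X -> R) (u : nat -> X) (l : X) : Prop :=
  forall eps, 0 < eps -> exists N, forall n, (n >= N)%nat -> d (u n) l < eps.

Definition complete {X : Type} (d : X -> X -> R) : Prop :=
  forall u, cauchy_seq d u -> exists l, converges_to d u l.

Definition P2 {X : Type} (d : X -> X -> R) (T : X -> X) : Prop :=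
  forall x y, 2 * (d (T x) (T y)) ^ 2 <=
    (d x (T y)) ^ 2 + (d y (T x)) ^ 2 - (d x (T x)) ^ 2 - (d y (T y)) ^ 2.

Definition Fix {X : Type} (T : X -> X) : X -> Prop := fun p => T p = p.

Fixpoint iter_seq {X : Type} (T : nat -> X -> X) (x : X) (n : nat) : X :=
  match n with
  | O => x
  | S k => T k (iter_seq T x k)
  end.

(* Let p be a common fixed point. Property (P_2) with y = p gives
   d(T z, p)^2 <= d(z, p)^2 - d(z, T z)^2, so d(x_n, p)^2 decreases and
   sum_n d(x_n, x_(n+1))^2 <= d(x, p)^2; in particular the steps tend to 0.
   By (C2) the ratios a_n = d(x_n, x_(n+1)) / gamma_n decrease, hence
   a_n^2 * sum_(k <= n) gamma_k^2 <= sum_(k <= n) d(x_k, x_(k+1))^2 stays bounded and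
   the divergence of sum gamma_k^2 forces a_n -> 0. Finally (C1) and the triangle
   inequality give d(x_n, T_m x_n) <= 2 d(x_n, x_(n+1)) + gamma_m a_n. *)

From Stdlib Require Import Reals Lra Lia Psatz.
Open Scope R_scope.

Lemma Un_cv_const (c : R) : Un_cv (fun _ => c) c.
Proof.
  intros eps Heps; exists 0%nat; intros n _.
  unfold R_dist; rewrite Rminus_diag, Rabs_R0; exact Heps.
Qed.

Lemma Un_cv_0_scal (c : R) (u : nat -> R) :
  Un_cv u 0 -> Un_cv (fun n => c * u n) 0.
Proof.
  intro Hu; rewrite <- (Rmult_0_r c).
  exact (CV_mult _ _ _ _ (Un_cv_const c) Hu).
Qed.

Lemma Un_cv_0_le (u v : nat -> R) :
  (forall n, 0 <= u n <= v n) -> Un_cv v 0 -> Un_cv u 0.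
Proof.
  intros Huv Hv eps Heps.
  destruct (Hv eps Heps) as [N HN]; exists N; intros n Hn.
  specialize (HN n Hn); specialize (Huv n); unfold R_dist in *.
  rewrite Rminus_0_r in *; rewrite Rabs_pos_eq in * by lra; lra.
Qed.

Lemma Un_cv_0_of_sq_le (u v : nat -> R) :
  (forall n, u n ^ 2 <= v n) -> Un_cv v 0 -> Un_cv u 0.
Proof.
  intros Huv Hv eps Heps.
  destruct (Hv (eps ^ 2) ltac:(apply pow_lt; lra)) as [N HN]; exists N; intros n Hn.
  specialize (HN n Hn); specialize (Huv n); unfold R_dist in *.
  rewrite Rminus_0_r in *.
  pose proof (Rle_abs (v n)); pose proof (Rabs_pos (u n)).
  rewrite <- pow2_abs in Huv; nra.
Qed.

Lemma sum_le_telescope (f D : nat -> R) :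
  (forall n, f n <= D n - D (S n)) ->
  forall N, sum_f_R0 f N <= D 0%nat - D (S N).
Proof.
  intros Hf; induction N as [|N IH]; simpl.
  - exact (Hf 0%nat).
  - specialize (Hf (S N)); lra.
Qed.

Lemma Un_cv_0_of_sq_le_decrement (e D : nat -> R) :
  (forall n, 0 <= D n) -> (forall n, e n ^ 2 <= D n - D (S n)) -> Un_cv e 0.
Proof.
  intros HD He.
  assert (Hdecr : Un_decreasing D).
  { intro n; specialize (He n); pose proof (pow2_ge_0 (e n)); lra. }
  assert (Hlb : has_lb D).
  { exists 0; intros r [n ->]; unfold opp_seq; specialize (HD n); lra. }
  destruct (decreasing_cv D Hdecr Hlb) as [L HL].
  apply (Un_cv_0_of_sq_le e (fun n => D n - D (S n))); [exact He|].
  rewrite <- (Rminus_diag L).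
  apply (CV_minus _ _ _ _ HL).
  apply (CV_shift' D 1 L) in HL.
  intros eps Heps; destruct (HL eps Heps) as [N HN]; exists N; intros n Hn.
  rewrite <- Nat.add_1_r; exact (HN n Hn).
Qed.

Lemma Un_cv_0_of_weighted_sq_sum_bounded (a g : nat -> R) (B : R) :
  (forall n, 0 <= a n) -> Un_decreasing a ->
  (forall N, sum_f_R0 (fun k => (a k * g k) ^ 2) N <= B) ->
  (forall M, exists N, M < sum_f_R0 (fun k => g k ^ 2) N) ->
  Un_cv a 0.
Proof.
  intros Ha0 Hdecr HB Hdiv eps Heps.
  assert (Heps2 : 0 < eps ^ 2) by (apply pow_lt; lra).
  assert (HB0 : 0 <= B).
  { specialize (HB 0%nat); simpl in HB; pose proof (pow2_ge_0 (a 0%nat * g 0%nat)); lra. }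
  destruct (Hdiv (B / eps ^ 2)) as [N HN]; exists N; intros n Hn.
  assert (Hweighted : a n ^ 2 * sum_f_R0 (fun k => g k ^ 2) N <= B).
  { rewrite scal_sum; eapply Rle_trans; [|apply (HB N)].
    apply sum_Rle; intros k Hk.
    assert (Hak : a n <= a k) by (apply decreasing_prop; [exact Hdecr | lia]).
    rewrite Rpow_mult_distr, Rmult_comm.
    apply Rmult_le_compat_r; [apply pow2_ge_0|].
    specialize (Ha0 n); nra. }
  assert (HBeps : B < eps ^ 2 * sum_f_R0 (fun k => g k ^ 2) N).
  { apply (Rmult_lt_compat_l (eps ^ 2)) in HN; [|exact Heps2].
    replace (eps ^ 2 * (B / eps ^ 2)) with B in HN by (field; lra); exact HN. }
  assert (Hsum_pos : 0 < sum_f_R0 (fun k => g k ^ 2) N) by nra.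
  assert (Hsq : a n ^ 2 < eps ^ 2) by nra.
  unfold R_dist; rewrite Rminus_0_r, Rabs_pos_eq by apply Ha0.
  specialize (Ha0 n); nra.
Qed.

Section Metric.

Variables (X : Type) (d : X -> X -> R).
Hypothesis Hd : is_metric d.

Lemma P2_fixed_point_dist (T : X -> X) (p z : X) :
  P2 d T -> T p = p -> d (T z) p ^ 2 <= d z p ^ 2 - d z (T z) ^ 2.
Proof.
  destruct Hd as (_ & Hzero & Hsym & _).
  intros HT Hp; specialize (HT z p); rewrite Hp in HT.
  assert (Hpp : d p p = 0) by (apply Hzero; reflexivity).
  rewrite Hpp, (Hsym p (T z)) in HT; lra.
Qed.

Lemma C1_dist_le (Tn Tm : X -> X) (gn gm : R) (w : X) :
  0 < gn -> 0 < gm ->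
  d (Tn w) (Tm w) <= Rabs (gn - gm) / gn * d w (Tn w) ->
  d w (Tm w) <= 2 * d w (Tn w) + gm * (d w (Tn w) / gn).
Proof.
  destruct Hd as (Hpos & _ & _ & Htri).
  intros Hgn Hgm HC.
  assert (Habs : Rabs (gn - gm) <= gn + gm) by (apply Rabs_le; lra).
  assert (Hratio : Rabs (gn - gm) / gn * d w (Tn w) <= (gn + gm) / gn * d w (Tn w)).
  { apply Rmult_le_compat_r; [apply Hpos|].
    apply Rmult_le_compat_r; [left; apply Rinv_0_lt_compat|]; lra. }
  replace ((gn + gm) / gn * d w (Tn w)) with (d w (Tn w) + gm * (d w (Tn w) / gn))
    in Hratio by (field; lra).
  pose proof (Htri w (Tn w) (Tm w)); pose proof (Hpos w (Tn w)); lra.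
Qed.

End Metric.

Theorem proposition3p4 (X : Type) (d : X -> X -> R)
  (HX : CAT0 d) (Hc : complete d)
  (T : nat -> X -> X) (HP2 : forall n, P2 d (T n))
  (HF : exists p, forall n, Fix (T n) p)
  (x : X) (gam : nat -> R) (Hgam : forall n, 0 < gam n)
  (Hdiv : forall M, exists N, M < sum_f_R0 (fun k => gam k ^ 2) N)
  (C1 : forall n m w, d (T n w) (T m w) <= Rabs (gam n - gam m) / gam n * d w (T n w))
  (C2 : forall n,
     d (iter_seq T x (S n)) (iter_seq T x (S (S n))) / gam (S n)
       <= d (iter_seq T x n) (iter_seq T x (S n)) / gam n) :
  forall m, Un_cv (fun n => d (iter_seq T x n) (T m (iter_seq T x n))) 0.
Proof.
  destruct HF as [p Hp]; intro m.
  assert (Hd : is_metric d) by apply HX.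
  set (step := fun n => d (iter_seq T x n) (iter_seq T x (S n))).
  set (D := fun n => d (iter_seq T x n) p ^ 2).
  assert (Hdecrement : forall n, step n ^ 2 <= D n - D (S n)).
  { intro n; pose proof (P2_fixed_point_dist X d Hd _ p (iter_seq T x n) (HP2 n) (Hp n)).
    unfold step, D; simpl; lra. }
  assert (HD0 : forall n, 0 <= D n) by (intro; apply pow2_ge_0).
  pose proof (Un_cv_0_of_sq_le_decrement step D HD0 Hdecrement) as Hstep.
  assert (Hratio : Un_cv (fun n => step n / gam n) 0).
  { apply (Un_cv_0_of_weighted_sq_sum_bounded _ gam (D 0%nat)); [| exact C2 | | exact Hdiv].
    - intro n; apply Rmult_le_pos; [apply Hd | left; apply Rinv_0_lt_compat, Hgam].
    - intro N.
      assert (Hsum := sum_le_telescope (fun k => (step k / gam k * gam k) ^ 2) D).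
      enough (H : forall n, (step n / gam n * gam n) ^ 2 <= D n - D (S n))
        by (specialize (Hsum H N); specialize (HD0 (S N)); lra).
      intro n; replace (step n / gam n * gam n) with (step n)
        by (field; apply Rgt_not_eq, Hgam); apply Hdecrement. }
  apply (Un_cv_0_le _ (fun n => 2 * step n + gam m * (step n / gam n))).
  - intro n; split; [apply Hd|].
    exact (C1_dist_le X d Hd (T n) (T m) _ _ (iter_seq T x n) (Hgam n) (Hgam m) (C1 n m _)).
  - rewrite <- (Rplus_0_r 0).
    exact (CV_plus _ _ _ _ (Un_cv_0_scal 2 _ Hstep) (Un_cv_0_scal (gam m) _ Hratio)).
Qed.
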